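(* As formal power series in $z$ (with coefficients rational functions of $q,s$), $$\sum_{n\ge0}\frac{r_{2n}(s,q)}{(q^2;q^2)_n}z^n=\frac{e_{q^2}(s^2z)\,e_{q^2}(z)}{e_q(-sz)},\qquad \sum_{n\ge0}\frac{r_{2n+1}(s,q)}{(q^2;q^2)_n}z^n=(1+s)\frac{e_{q^2}(s^2z)\,e_{q^2}(z)}{e_q(-qsz)}.$$
   Context: $q$ is an indeterminate (or a real number with $|q|<1$). $(x;q)_n=\prod_{j=0}^{n-1}(1-q^jx)$. The Gaussian binomial coefficient is $\begin{bmatrix} n\\ j\end{bmatrix}_q=\frac{(q;q)_n}{(q;q)_j(q;q)_{n-j}}$ for $0\le j\le n$ and $0$ otherwise. The Rogers–Szegö polynomials are $r_n(s,q)=\sum_{j=0}^n\begin{bmatrix} n\\ j\end{bmatrix}_q s^j$. $e_q(w)=\sum_{n\ge0}\frac{w^n}{(q;q)_n}$ as a formal power series, and $1/e_q(w)$ denotes its formal reciprocal. *)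

From HB Require Import structures.
From mathcomp Require Import all_boot all_order all_algebra.
Set Implicit Arguments. Unset Strict Implicit. Unset Printing Implicit Defensive.
Import GRing.Theory.
Local Open Scope ring_scope.

Definition qpoch (K : fieldType) (x q : K) (n : nat) : K :=
  \prod_(j < n) (1 - q ^+ j * x).

Definition qbinom (K : fieldType) (q : K) (n j : nat) : K :=
  if (j <= n)%N then qpoch q q n / (qpoch q q j * qpoch q q (n - j)) else 0.

Definition rogers_szego (K : fieldType) (s q : K) (n : nat) : K :=
  \sum_(j < n.+1) qbinom q n j * s ^+ j.

Definition fps (K : fieldType) := nat -> K.

Definition fps_mul (K : fieldType) (f g : fps K) : fps K :=
  fun n => \sum_(i < n.+1) f i * g (n - i)%N.

(* formal reciprocal of f (meaningful when f 0 != 0):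
   g 0 = f0^-1, g n = - f0^-1 * sum_{k=1}^n f k * g (n-k).
   inv_list f n is the list [g 0; ...; g n]. *)
Fixpoint fps_inv_list (K : fieldType) (f : fps K) (n : nat) : seq K :=
  match n with
  | 0 => [:: (f 0%N)^-1]
  | n'.+1 =>
      let s := fps_inv_list f n' in
      rcons s (- (f 0%N)^-1 *
               \sum_(k < n'.+1) f k.+1 * nth 0 s (n' - k)%N)
  end.

Definition fps_inv (K : fieldType) (f : fps K) : fps K :=
  fun n => nth 0 (fps_inv_list f n) n.

(* e_q(a z) = sum_n a^n z^n / (q;q)_n, as a series in z *)
Definition eq_exp (K : fieldType) (q a : K) : fps K :=
  fun n => a ^+ n / qpoch q q n.

(* Both sides satisfy the same three-term recurrence in n and agree at n = 0.
   Two steps of the Rogers-Szego recurrence r_{m+2} = (1+s) r_{m+1} - s (1-q^{m+1}) r_m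
   relate r_{m+4}, r_{m+2} and r_m; for m = 2n + d with d = 0 or 1 the product
   (1 - q^{m+2}) (1 - q^{m+1}) contains the factor 1 - q^{2n+2} of (q^2;q^2)_{n+1},
   which gives the recurrence of r_{2n+d} / (q^2;q^2)_n.  On the other side
   e_Q(a Q z) = (1 - a z) e_Q(a z), so R = e_{q^2}(s^2 z) e_{q^2}(z) / e_q(-b z) satisfies
   (1 + b q z) (1 + b z) R(q^2 z) = (1 - s^2 z) (1 - z) R(z), whose coefficients give the
   same recurrence.  This functional equation is proved for polynomial truncations
   modulo z^N, where the ring structure of polynomials is available. *)

From HB Require Import structures.
From mathcomp Require Import all_boot all_order all_algebra.
From mathcomp Require Import ring zify.
Set Implicit Arguments.
Unset Strict Implicit.
Unset Printing Implicit Defensive.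
Import GRing.Theory.
Local Open Scope ring_scope.

Local Notation "p = r %[mod d ]" := (p %% d = r %% d) : ring_scope.

Lemma qpoch0 (K : fieldType) (x q : K) : qpoch x q 0 = 1.
Proof. by rewrite /qpoch big_ord0. Qed.

Lemma qpochS (K : fieldType) (x q : K) n :
  qpoch x q n.+1 = qpoch x q n * (1 - q ^+ n * x).
Proof. by rewrite /qpoch big_ord_recr. Qed.

Section TruncatedSeries.
Variable K : fieldType.
Implicit Types (f g : fps K) (p r : {poly K}) (a c : K).

Lemma eq_modXnP N p r :
  p = r %[mod 'X^N] <-> forall k, (k < N)%N -> p`_k = r`_k.
Proof.
rewrite -!Pdiv.IdomainMonic.take_poly_modp; split=> [pr k kN | pr].
  by have := congr1 (coefp k) pr; rewrite /= !coef_take_poly kN.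
by apply/polyP => k; rewrite !coef_take_poly; case: ltnP => // /pr.
Qed.

Lemma eq_modXn_mul N p1 p2 r1 r2 :
  p1 = p2 %[mod 'X^N] -> r1 = r2 %[mod 'X^N] -> p1 * r1 = p2 * r2 %[mod 'X^N].
Proof.
move=> eqp eqr; rewrite -modp_mul eqr modp_mul [p1 * _]mulrC [p2 * _]mulrC.
by rewrite -modp_mul eqp modp_mul.
Qed.

Definition fps_trunc N f : {poly K} := \poly_(i < N) f i.

Lemma coef_fps_trunc N f k : (k < N)%N -> (fps_trunc N f)`_k = f k.
Proof. by move=> kN; rewrite coef_poly kN. Qed.

Lemma fps_trunc_mul N f g :
  fps_trunc N (fps_mul f g) = fps_trunc N f * fps_trunc N g %[mod 'X^N].
Proof.
apply/eq_modXnP => k kN; rewrite coefM coef_fps_trunc //.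
by apply: eq_bigr => i _; rewrite !coef_fps_trunc //; have := ltn_ord i; lia.
Qed.

Lemma size_fps_inv_list f n : size (fps_inv_list f n) = n.+1.
Proof. by elim: n => [|n IHn] //=; rewrite size_rcons IHn. Qed.

Lemma nth_fps_inv_list f n j : (j <= n)%N -> nth 0 (fps_inv_list f n) j = fps_inv f j.
Proof.
elim: n => [|n IHn] jn; first by case: j jn.
rewrite /= nth_rcons size_fps_inv_list; case: ltngtP jn => // [jn _ | ->].
  by rewrite IHn.
by rewrite /fps_inv /= nth_rcons size_fps_inv_list ltnn eqxx.
Qed.

Lemma fps_invS f n : fps_inv f n.+1 =
  - (f 0%N)^-1 * \sum_(k < n.+1) f k.+1 * fps_inv f (n - k)%N.
Proof.
rewrite {1}/fps_inv /= nth_rcons size_fps_inv_list ltnn eqxx.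
by congr (_ * _); apply: eq_bigr => k _; rewrite nth_fps_inv_list ?leq_subr.
Qed.

Lemma fps_mulV f n : f 0%N != 0 -> fps_mul f (fps_inv f) n = (n == 0)%:R.
Proof.
move=> f0; case: n => [|n]; first by rewrite /fps_mul big_ord1 /= divff.
rewrite /fps_mul big_ord_recl subn0 fps_invS mulrA mulrN divff // mulN1r.
by rewrite addrC -sumrB big1 // => k _; rewrite lift0 subSS subrr.
Qed.

Lemma fps_trunc_mulV N f : f 0%N != 0 ->
  fps_trunc N f * fps_trunc N (fps_inv f) = 1 %[mod 'X^N].
Proof.
move=> f0; rewrite -fps_trunc_mul; apply/eq_modXnP => k kN.
by rewrite coef_fps_trunc // fps_mulV // coef1.
Qed.

Definition dilate c p := p \Po (c *: 'X).

Lemma coef_dilate c p k : (dilate c p)`_k = c ^+ k * p`_k.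
Proof.
rewrite /dilate comp_polyE; under eq_bigr do rewrite exprZn scalerA.
rewrite -(poly_def (size p) (fun i => p`_i * c ^+ i)) coef_poly mulrC.
by case: ltnP => // /(nth_default 0) ->; rewrite mulr0.
Qed.

Lemma dilateM c : {morph dilate c : p r / p * r}.
Proof. by move=> p r; apply: comp_polyM. Qed.

Lemma dilate1 c : dilate c 1 = 1.
Proof. exact: comp_polyC. Qed.

Lemma dilate_linear c a : dilate c (1 + a *: 'X) = 1 + (a * c) *: 'X.
Proof. by rewrite /dilate comp_polyD comp_polyC comp_polyZ comp_polyX scalerA. Qed.

Lemma dilate_comp c c' p : dilate c (dilate c' p) = dilate (c' * c) p.
Proof. by apply/polyP => k; rewrite !coef_dilate mulrA -exprMn [c * c']mulrC. Qed.

Lemma eq_modXn_dilate N c p r :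
  p = r %[mod 'X^N] -> dilate c p = dilate c r %[mod 'X^N].
Proof. by move/eq_modXnP=> pr; apply/eq_modXnP => k kN; rewrite !coef_dilate pr. Qed.

Lemma coef0_lin_mul a p : ((1 + a *: 'X) * p)`_0 = p`_0.
Proof. by rewrite mulrDl mul1r -scalerAl coefD coefZ coefXM mulr0 addr0. Qed.

Lemma coefS_lin_mul a p k : ((1 + a *: 'X) * p)`_k.+1 = p`_k.+1 + a * p`_k.
Proof. by rewrite mulrDl mul1r -scalerAl coefD coefZ coefXM. Qed.

Lemma coef1_lin2_mul u v p :
  ((1 + u *: 'X) * (1 + v *: 'X) * p)`_1 = p`_1 + (u + v) * p`_0.
Proof. rewrite -mulrA coefS_lin_mul coefS_lin_mul !coef0_lin_mul; ring. Qed.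

Lemma coefSS_lin2_mul u v p k :
  ((1 + u *: 'X) * (1 + v *: 'X) * p)`_k.+2 =
  p`_k.+2 + (u + v) * p`_k.+1 + u * v * p`_k.
Proof. rewrite -mulrA !coefS_lin_mul; ring. Qed.

Lemma eq_exp0 Q a : eq_exp Q a 0%N = 1.
Proof. by rewrite /eq_exp expr0 qpoch0 divr1. Qed.

Lemma eq_exp_dilate N Q a : (forall k, qpoch Q Q k != 0) ->
  dilate Q (fps_trunc N (eq_exp Q a)) =
  (1 + (- a) *: 'X) * fps_trunc N (eq_exp Q a) %[mod 'X^N].
Proof.
move=> qpochQ_neq0; apply/eq_modXnP => -[|k] kN.
  by rewrite coef_dilate coef0_lin_mul mul1r.
rewrite coef_dilate coefS_lin_mul !coef_fps_trunc // 1?ltnW // /eq_exp qpochS.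
have := qpochQ_neq0 k.+1; rewrite qpochS mulf_eq0 negb_or => /andP[? ?].
by rewrite !exprS; field; apply/andP.
Qed.

Lemma dilate_quotient N c (A B E : fps K) (alpha beta gamma : {poly K}) :
  E 0%N != 0 ->
  dilate c (fps_trunc N A) = alpha * fps_trunc N A %[mod 'X^N] ->
  dilate c (fps_trunc N B) = beta * fps_trunc N B %[mod 'X^N] ->
  dilate c (fps_trunc N E) = gamma * fps_trunc N E %[mod 'X^N] ->
  gamma * dilate c (fps_trunc N (fps_mul (fps_mul A B) (fps_inv E))) =
  alpha * beta * fps_trunc N (fps_mul (fps_mul A B) (fps_inv E)) %[mod 'X^N].
Proof.
move=> E0 dilA dilB dilE.
set a := fps_trunc N A; set b := fps_trunc N B; set e := fps_trunc N E.
set i := fps_trunc N (fps_inv E); set R := fps_trunc N _.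
have eqR : R = a * b * i %[mod 'X^N].
  rewrite fps_trunc_mul; apply: eq_modXn_mul => //; exact: fps_trunc_mul.
have ei1 : e * i = 1 %[mod 'X^N] by exact: fps_trunc_mulV.
have dil_i : gamma * dilate c i = i %[mod 'X^N].
  rewrite -[gamma * _]mulr1.
  transitivity ((dilate c i * (gamma * e) * i) %% 'X^N).
    rewrite (_ : _ * (gamma * e) * i = gamma * dilate c i * (e * i)); last by ring.
    by apply: eq_modXn_mul => //; rewrite ei1.
  transitivity ((dilate c i * dilate c e * i) %% 'X^N).
    by apply: eq_modXn_mul => //; apply: eq_modXn_mul => //; rewrite dilE.
  rewrite -dilateM -[X in _ = X %% _]mul1r; apply: eq_modXn_mul => //.
  by rewrite -(dilate1 c); apply: eq_modXn_dilate; rewrite mulrC.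
transitivity ((dilate c a * dilate c b * (gamma * dilate c i)) %% 'X^N).
  rewrite (_ : _ * (gamma * _) = gamma * (dilate c a * dilate c b * dilate c i)).
    by apply: eq_modXn_mul => //; rewrite -!dilateM; apply: eq_modXn_dilate.
  by ring.
transitivity ((alpha * a * (beta * b) * i) %% 'X^N).
  by apply: eq_modXn_mul => //; apply: eq_modXn_mul.
rewrite (_ : _ * _ * i = alpha * beta * (a * b * i)); last by ring.
by apply: eq_modXn_mul => //; rewrite eqR.
Qed.

End TruncatedSeries.

Section RogersSzego.
Variables (K : fieldType) (q : K).

Hypothesis qpoch_neq0 : forall n, qpoch q q n != 0.

Lemma subr1qS_neq0 n : 1 - q ^+ n.+1 != 0.
Proof. by have := qpoch_neq0 n.+1; rewrite qpochS -exprSr mulf_eq0 negb_or => /andP[]. Qed.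

Lemma qpoch_sqr_neq0 n : qpoch (q ^+ 2) (q ^+ 2) n != 0.
Proof.
by apply/prodf_neq0 => i _; rewrite -exprM -exprD mulnC addn2 subr1qS_neq0.
Qed.

Lemma qbinom_small n k : (n < k)%N -> qbinom q n k = 0.
Proof. by move=> h; rewrite /qbinom leqNgt h. Qed.

Lemma qbinomE n k : (k <= n)%N ->
  qbinom q n k = qpoch q q n / (qpoch q q k * qpoch q q (n - k)).
Proof. by rewrite /qbinom => ->. Qed.

Lemma qbinom0 n : qbinom q n 0 = 1.
Proof. by rewrite qbinomE // subn0 qpoch0 mul1r divff. Qed.

Lemma qbinomnn n : qbinom q n n = 1.
Proof. by rewrite qbinomE // subnn qpoch0 mulr1 divff. Qed.

Lemma qbinomS n k : (k <= n)%N ->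
  qbinom q n.+1 k.+1 = qbinom q n k.+1 + q ^+ (n - k) * qbinom q n k.
Proof.
rewrite leq_eqVlt => /predU1P[-> | ?].
  by rewrite qbinomnn qbinom_small // qbinomnn subnn mulr1 add0r.
have [t ->] : exists t, n = (k + t.+1)%N by exists (n - k.+1)%N; lia.
rewrite !qbinomE ?leq_addr //; try lia.
have -> : (k + t.+1 - k.+1 = t)%N by lia.
have -> : (k + t.+1 - k = t.+1)%N by lia.
have -> : ((k + t.+1).+1 - k.+1 = t.+1)%N by lia.
rewrite !qpochS -!exprSr.
have -> : q ^+ (k + t.+1).+1 = q ^+ k.+1 * q ^+ t.+1 by rewrite -exprD addSn.
by field; rewrite !subr1qS_neq0 !qpoch_neq0.
Qed.

Lemma mul_qbinom_down n k : (k <= n.+1)%N ->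
  (1 - q ^+ (n.+1 - k)) * qbinom q n.+1 k = (1 - q ^+ n.+1) * qbinom q n k.
Proof.
rewrite leq_eqVlt => /predU1P[-> | ?].
  by rewrite subnn expr0 subrr mul0r qbinom_small // mulr0.
have [t ->] : exists t, n = (k + t)%N by exists (n - k)%N; lia.
rewrite !qbinomE ?leq_addr //; try lia.
have -> : ((k + t).+1 - k = t.+1)%N by lia.
rewrite addKn !qpochS -!exprSr.
by field; rewrite !subr1qS_neq0 !qpoch_neq0.
Qed.

Variable s : K.
Local Notation r := (rogers_szego s q).

Lemma rogers_szego0 : r 0 = 1.
Proof. by rewrite /rogers_szego big_ord1 /= qbinom0 mulr1. Qed.

Lemma rogers_szego_widen n : r n = \sum_(k < n.+2) qbinom q n k * s ^+ k.
Proof.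
by rewrite /rogers_szego [RHS]big_ord_recr /= qbinom_small // mul0r addr0.
Qed.

Lemma rogers_szegoS n :
  r n.+1 = r n + s * \sum_(k < n.+1) q ^+ (n - k) * qbinom q n k * s ^+ k.
Proof.
rewrite [r n]rogers_szego_widen /rogers_szego !(big_ord_recl n.+1) /= !qbinom0.
rewrite -addrA mulr_sumr -big_split; congr (_ + _); apply: eq_bigr => k _.
rewrite /bump add1n qbinomS ?leq_ord // exprS /=; ring.
Qed.

Lemma weighted_rogers_szegoS n :
  \sum_(k < n.+2) q ^+ (n.+1 - k) * qbinom q n.+1 k * s ^+ k =
  r n.+1 - (1 - q ^+ n.+1) * r n.
Proof.
rewrite [r n]rogers_szego_widen /rogers_szego mulr_sumr -sumrB.
apply: eq_bigr => k _; rewrite mulrA -mul_qbinom_down ?leq_ord //; ring.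
Qed.

Lemma rogers_szego1 : r 1 = 1 + s.
Proof. by rewrite rogers_szegoS rogers_szego0 big_ord1 /= qbinom0 !mulr1. Qed.

Lemma rogers_szego_rec n :
  r n.+2 = (1 + s) * r n.+1 - s * (1 - q ^+ n.+1) * r n.
Proof. rewrite [in LHS]rogers_szegoS weighted_rogers_szegoS; ring. Qed.

Lemma rogers_szego_rec2 n :
  r n.+4 = (1 + s ^+ 2 + s * (q ^+ n.+2 + q ^+ n.+3)) * r n.+2
           - s ^+ 2 * (1 - q ^+ n.+2) * (1 - q ^+ n.+1) * r n.
Proof. rewrite !rogers_szego_rec !exprS; ring. Qed.

Local Notation Q := (q ^+ 2).

Lemma subr1QS_neq0 k : 1 - Q ^+ k.+1 != 0.
Proof. by rewrite -exprM mul2n doubleS subr1qS_neq0. Qed.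

(* The coefficientwise form of (1 + b q z) (1 + b z) X(q^2 z) = (1 - s^2 z) (1 - z) X(z). *)
Definition three_term_rec (b : K) (X : nat -> K) :=
  (1 - Q) * X 1%N = (1 + s ^+ 2 + b * (1 + q)) * X 0%N /\
  forall k, (1 - Q ^+ k.+2) * X k.+2 =
    (1 + s ^+ 2 + b * (1 + q) * Q ^+ k.+1) * X k.+1
    - (s ^+ 2 - b ^+ 2 * q * Q ^+ k) * X k.

Lemma three_term_rec_scale b c X : three_term_rec b X -> three_term_rec b (fun n => c * X n).
Proof.
move=> [rec1 rec]; split=> [|k]; first by rewrite mulrCA rec1 mulrCA.
by rewrite mulrCA rec; ring.
Qed.

Lemma three_term_rec_eq b X Y : three_term_rec b X -> three_term_rec b Y -> X 0%N = Y 0%N -> X =1 Y.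
Proof.
move=> [X1 Xrec] [Y1 Yrec] XY0.
suff XY n : X n = Y n /\ X n.+1 = Y n.+1 by move=> n; case: (XY n).
elim: n => [|n [XYn XYn1]].
  by split=> //; apply: (mulfI (subr1QS_neq0 0)); rewrite expr1 X1 Y1 XY0.
by split=> //; apply: (mulfI (subr1QS_neq0 n.+1)); rewrite Xrec Yrec XYn XYn1.
Qed.

Definition rs_bisect (d n : nat) := rogers_szego s q (n.*2 + d) / qpoch Q Q n.

Lemma subr1_qexp_pair d k : (d < 2)%N ->
  (1 - q ^+ (k.*2 + d).+2) * (1 - q ^+ (k.*2 + d).+1) =
  (1 - Q ^+ k.+1) * (1 - q ^+ d ^+ 2 * q * Q ^+ k).
Proof.
have qQ j : q ^+ (k.*2 + j) = Q ^+ k * q ^+ j by rewrite exprD -mul2n exprM.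
by case: d => [|[|//]] _; rewrite -!addnS !qQ !exprS; ring.
Qed.

Lemma rs_bisect0 d : rs_bisect d 0 = rogers_szego s q d.
Proof. by rewrite /rs_bisect qpoch0 divr1. Qed.

Lemma rs_bisect_step d k : (d < 2)%N ->
  (1 - Q ^+ k.+2) * rs_bisect d k.+2 =
  (1 + s ^+ 2 + q ^+ d * s * (1 + q) * Q ^+ k.+1) * rs_bisect d k.+1
  - (s ^+ 2 - (q ^+ d * s) ^+ 2 * q * Q ^+ k) * rs_bisect d k.
Proof.
move=> d_lt2; rewrite /rs_bisect !doubleS !addSn rogers_szego_rec2.
have qm2 : q ^+ (k.*2 + d).+2 = q ^+ d * Q ^+ k.+1.
  by rewrite -!addSn -doubleS exprD -mul2n exprM mulrC.
rewrite -[s ^+ 2 * _ * _]mulrA (@subr1_qexp_pair d k d_lt2) [q ^+ (_ + d).+3]exprS qm2.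
have := subr1QS_neq0 k; have := subr1QS_neq0 k.+1; have := qpoch_sqr_neq0 k.
rewrite !qpochS ![Q ^+ _.+1]exprSr => ? ? ?.
by field; apply/and3P.
Qed.

Lemma rs_bisect_rec d : (d < 2)%N -> three_term_rec (q ^+ d * s) (rs_bisect d).
Proof.
have Q1_neq0 := subr1QS_neq0 0; rewrite expr1 in Q1_neq0.
case: d => [|[|//]] _; split.
- rewrite /rs_bisect /= qpochS qpoch0 rogers_szego_rec rogers_szego1 rogers_szego0.
  by rewrite expr0 mul1r; field; rewrite oner_neq0 Q1_neq0.
- by move=> k; apply: rs_bisect_step.
- rewrite /rs_bisect /= qpochS qpoch0 !rogers_szego_rec rogers_szego1 rogers_szego0.
  by rewrite expr0 mul1r; field; rewrite oner_neq0 Q1_neq0.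
- by move=> k; apply: rs_bisect_step.
Qed.

Definition exp_ratio (b : K) : fps K :=
  fps_mul (fps_mul (eq_exp Q (s ^+ 2)) (eq_exp Q 1)) (fps_inv (eq_exp q (- b))).

Lemma exp_ratio0 b : exp_ratio b 0%N = 1.
Proof. by rewrite /exp_ratio /fps_mul !big_ord1 /fps_inv /= !eq_exp0 invr1 !mulr1. Qed.

Lemma eq_exp_dilate_sqr N b :
  dilate Q (fps_trunc N (eq_exp q (- b))) =
  (1 + (b * q) *: 'X) * (1 + b *: 'X) * fps_trunc N (eq_exp q (- b)) %[mod 'X^N].
Proof.
have dil := eq_exp_dilate N (- b) qpoch_neq0; rewrite opprK in dil.
rewrite -mulrA -dilate_comp.
transitivity (dilate q ((1 + b *: 'X) * fps_trunc N (eq_exp q (- b))) %% 'X^N).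
  exact: eq_modXn_dilate.
by rewrite dilateM dilate_linear; apply: eq_modXn_mul.
Qed.

Lemma exp_ratio_dilate N b :
  (1 + (b * q) *: 'X) * (1 + b *: 'X) * dilate Q (fps_trunc N (exp_ratio b)) =
  (1 + (- s ^+ 2) *: 'X) * (1 + (- 1) *: 'X) * fps_trunc N (exp_ratio b) %[mod 'X^N].
Proof.
apply: dilate_quotient; first by rewrite eq_exp0 oner_neq0.
- exact: eq_exp_dilate qpoch_sqr_neq0.
- exact: eq_exp_dilate qpoch_sqr_neq0.
- exact: eq_exp_dilate_sqr.
Qed.

Lemma eq_by_diff (x y u v : K) : x = y -> u - v = y - x -> u = v.
Proof. by move=> -> uv; apply/eqP; rewrite -subr_eq0 uv subrr. Qed.

Lemma exp_ratio_rec b : three_term_rec b (exp_ratio b).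
Proof.
split=> [|k].
  move/eq_modXnP/(_ 1%N isT): (exp_ratio_dilate 2 b).
  rewrite coef1_lin2_mul coef1_lin2_mul !coef_dilate !coef_fps_trunc // => eq1.
  by apply: (eq_by_diff eq1); ring.
move/eq_modXnP/(_ k.+2 (ltnSn _)): (exp_ratio_dilate k.+3 b).
rewrite !coefSS_lin2_mul !coef_dilate !coef_fps_trunc; try lia.
move=> eqk; apply: (eq_by_diff eqk); ring.
Qed.

End RogersSzego.

Theorem lemma1p2 (K : fieldType) (q s : K)
  (hq : forall n : nat, qpoch q q n != 0) :
  (forall n : nat,
     rogers_szego s q (2 * n) / qpoch (q ^+ 2) (q ^+ 2) n =
     fps_mul (fps_mul (eq_exp (q ^+ 2) (s ^+ 2)) (eq_exp (q ^+ 2) 1))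
             (fps_inv (eq_exp q (- s))) n) /\
  (forall n : nat,
     rogers_szego s q (2 * n).+1 / qpoch (q ^+ 2) (q ^+ 2) n =
     (1 + s) * fps_mul (fps_mul (eq_exp (q ^+ 2) (s ^+ 2)) (eq_exp (q ^+ 2) 1))
             (fps_inv (eq_exp q (- (q * s)))) n).
Proof.
have even_rec : three_term_rec q s s (rs_bisect q s 0).
  by have := rs_bisect_rec hq s (ltn0Sn 1); rewrite expr0 mul1r.
have odd_rec : three_term_rec q s (q * s) (rs_bisect q s 1).
  by have := rs_bisect_rec hq s (ltnSn 1); rewrite expr1.
have even0 : rs_bisect q s 0 0 = exp_ratio q s s 0%N.
  by rewrite rs_bisect0 (rogers_szego0 hq) exp_ratio0.
have odd0 : rs_bisect q s 1 0 = (1 + s) * exp_ratio q s (q * s) 0%N.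
  by rewrite rs_bisect0 (rogers_szego1 hq) exp_ratio0 mulr1.
have even_eq := three_term_rec_eq hq even_rec (exp_ratio_rec hq s s) even0.
have odd_eq := three_term_rec_eq hq odd_rec (three_term_rec_scale (1 + s) (exp_ratio_rec hq s (q * s))) odd0.
by split=> n; [move: (even_eq n) | move: (odd_eq n)];
  rewrite /rs_bisect ?addn0 ?addn1 -mul2n.
Qed.
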